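(* Let $c_1,c_2\in\mathbb N$ be absolute constants such that $e(c_1m,{\rm APP}_{\infty,d};\Lambda^{\rm std})\le c_2\,e(m,{\rm APP}_{\infty,d};\Lambda^{\rm all})$ for all $d,m\in\mathbb N$ and all admissible weight functions $\omega$ (such constants exist). Then for $\star\in\{{\rm ABS},{\rm NOR}\}$, all $d\in\mathbb N$ and all $\varepsilon\in(0,1)$, $$ n^\star(\varepsilon,d;\Lambda^{\rm std})\le 2c_1\, n^\star\big(\varepsilon/c_2,d;\Lambda^{\rm all}\big).$$
   Context: $\mathbb T^d=[0,1]^d$ is the torus with Lebesgue measure; $\hat f(\mathbf k)=\int_{\mathbb T^d}f(\mathbf x)e^{-2\pi i\mathbf k\cdot\mathbf x}d\mathbf x$. For each $d$ an admissible weight is a function $\omega:\mathbb Z^d\to(0,\infty)$ with $\sum_{\mathbf k}\omega(\mathbf k)^{-2}<\infty$; $H^\omega(\mathbb T^d)$ is the Hilbert space of $f\in L_2(\mathbb T^d)$ with $\|f\|^2=\sum_{\mathbf k}|\hat f(\mathbf k)|^2\omega(\mathbf k)^2<\infty$, a reproducing kernel Hilbert space of continuous functions. ${\rm APP}_{\infty,d}:H^\omega(\mathbb T^d)\to L_\infty(\mathbb T^d)$ (sup norm), $f\mapsto f$. $\Lambda^{\rm all}$: all continuous linear functionals; $\Lambda^{\rm std}$: point evaluations. $e(n,{\rm APP}_{\infty,d};\Lambda)$ is the infimum over algorithms $A(f)=\phi(L_1f,\dots,L_nf)$, $L_i\in\Lambda$, $\phi$ arbitrary, of $\sup_{\|f\|\le1}\|f-A(f)\|_\infty$;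 for $n=0$, $A=0$ and $e(0,{\rm APP}_{\infty,d})=\sup_{\|f\|\le1}\|f\|_\infty=(\sum_k\lambda_{k,d})^{1/2}$, where $\lambda_{k,d}$ is the nonincreasing rearrangement of $\omega(\mathbf k)^{-2}$. Information complexity: $n^\star(\varepsilon,d;\Lambda)=\inf\{n\ge0: e(n,{\rm APP}_{\infty,d};\Lambda)\le\varepsilon\,{\rm CRI}_d\}$ with ${\rm CRI}_d=1$ for $\star={\rm ABS}$ and ${\rm CRI}_d=e(0,{\rm APP}_{\infty,d})$ for $\star={\rm NOR}$. *)

From HB Require Import structures.
From mathcomp Require Import all_boot all_order all_algebra.
From mathcomp Require Import all_classical all_reals.
From mathcomp Require Import ereal topology normedtype sequences esum trigo.
From mathcomp Require Import complex.

Set Implicit Arguments.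
Unset Strict Implicit.
Unset Printing Implicit Defensive.

Import Order.TTheory GRing.Theory Num.Theory.
Local Open Scope classical_set_scope.
Local Open Scope ring_scope.

Section Defs.
Variable R : realType.
Variable d : nat.

Definition Zd := {ffun 'I_d -> int}.

Definition in_torus (x : 'I_d -> R) : Prop := forall j, 0 <= x j <= 1.

Definition cabs2 (z : R[i]) : R := (complex.Re z) ^+ 2 + (complex.Im z) ^+ 2.
Definition cabs (z : R[i]) : R := Num.sqrt (cabs2 z).

Definition admissible (w : Zd -> R) : Prop :=
  (forall k, 0 < w k) /\ (\esum_(k in [set: Zd]) ((w k) ^-2)%:E < +oo)%E.

(* An element f of H^omega is represented by its Fourier coefficients
   a = (hat f(k))_k ; ||f||^2 = sum_k |a_k|^2 omega(k)^2. *)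
Definition hnorm2 (w : Zd -> R) (a : Zd -> R[i]) : \bar R :=
  \esum_(k in [set: Zd]) (cabs2 (a k) * (w k) ^+ 2)%:E.
Definition inH (w : Zd -> R) (a : Zd -> R[i]) : Prop := (hnorm2 w a < +oo)%E.
Definition in_ball (w : Zd -> R) (a : Zd -> R[i]) : Prop := (hnorm2 w a <= 1)%E.

Definition rsum (u : Zd -> R) : R :=
  fine (\esum_(k in [set: Zd]) (Num.max (u k) 0)%:E)
  - fine (\esum_(k in [set: Zd]) (Num.max (- u k) 0)%:E).
Definition csum (u : Zd -> R[i]) : R[i] :=
  Complex (rsum (fun k => complex.Re (u k))) (rsum (fun k => complex.Im (u k))).

Definition cexp2pi (t : R) : R[i] := Complex (cos (2 * pi * t)) (sin (2 * pi * t)).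

Definition feval (a : Zd -> R[i]) (x : 'I_d -> R) : R[i] :=
  csum (fun k => a k * cexp2pi (\sum_(j < d) (k j)%:~R * x j)).

Definition functional := (Zd -> R[i]) -> R[i].

(* continuous (= bounded) C-linear functionals on H^omega *)
Definition cont_linear (w : Zd -> R) (L : functional) : Prop :=
  (forall (c : R[i]) a b, inH w a -> inH w b ->
      L (fun k => c * a k + b k) = c * L a + L b) /\
  (exists M : R, forall a, inH w a -> cabs (L a) <= M * Num.sqrt (fine (hnorm2 w a))).

Inductive info_class := Lall | Lstd.

Definition in_class (w : Zd -> R) (Lam : info_class) (L : functional) : Prop :=
  match Lam with
  | Lall => cont_linear w L
  | Lstd => exists x, in_torus x /\ L = (fun a => feval a x)
  end.

(* worst-case L_infty error of the algorithm A(f) = phi(L_1 f, ..., L_n f) *)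
Definition alg_err (w : Zd -> R) (n : nat) (L : 'I_n -> functional)
    (phi : ('I_n -> R[i]) -> ('I_d -> R) -> R[i]) : \bar R :=
  ereal_sup [set r | exists a x, [/\ in_ball w a, in_torus x &
      r = (cabs (feval a x - phi (fun i => L i a) x))%:E]].

Definition ewc (w : Zd -> R) (n : nat) (Lam : info_class) : \bar R :=
  ereal_inf [set r | exists (L : 'I_n -> functional) phi,
      (forall i, in_class w Lam (L i)) /\ r = alg_err w L phi].

Inductive crit := ABS | NOR.

Definition CRI (w : Zd -> R) (c : crit) : \bar R :=
  match c with ABS => 1%E | NOR => ewc w 0 Lall end.

(* information complexity n^c(eps, d; Lambda) (= +oo if the set is empty) *)
Definition ncomp (w : Zd -> R) (c : crit) (Lam : info_class) (eps : R) : \bar R :=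
  ereal_inf [set (n%:R)%:E | n in [set n : nat | (ewc w n Lam <= eps%:E * CRI w c)%E]].

End Defs.

(* Let m be the least n with e(n, Lall) <= (eps/c2) CRI (if there is none, the
   right-hand side is +oo).  For m >= 1 the hypothesis gives
   e(c1 m, Lstd) <= c2 e(m, Lall) <= eps CRI, so n(Lstd) <= c1 m <= 2 c1 m.  The
   case m = 0 is outside the hypothesis but harmless: without information both
   classes give the same error, and since worst-case errors are nonnegative,
   CRI >= 0 and the error criterion only weakens when eps/c2 grows to eps. *)

From HB Require Import structures.
From mathcomp Require Import all_boot all_order all_algebra.
From mathcomp Require Import all_classical all_reals.
From mathcomp Require Import ereal topology normedtype sequences esum trigo.
From mathcomp Require Import complex.

Set Implicit Arguments.
Unset Strict Implicit.
Unset Printing Implicit Defensive.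

Import Order.TTheory GRing.Theory Num.Theory.
Local Open Scope classical_set_scope.
Local Open Scope ring_scope.

Lemma ereal_inf_nat_le (R : realType) (P Q : set nat) (k : nat) : (0 < k)%N ->
    (forall n, Q n -> exists2 m, P m & (m <= k * n)%N) ->
  (ereal_inf [set (n%:R)%:E | n in P]
     <= (k%:R)%:E * ereal_inf [set (n%:R)%:E | n in Q] :> \bar R)%E.
Proof.
move=> k_gt0 hPQ.
have [[n Qn]|noQ] := pselect (exists n, Q n); last first.
  have -> : [set (n%:R)%:E | n in Q] = set0 :> set (\bar R).
    by apply/seteqP; split=> [x [n Qn _]|//]; apply: noQ; exists n.
  by rewrite ereal_inf0 gt0_muley ?leey // lte_fin ltr0n.
have [m /asboolP Qm minm] := ex_minnP (ex_intro (fun n => `[< Q n >]) n (asboolT Qn)).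
have [p Pp le_pkm] := hPQ m Qm.
have inf_ge_m : ((m%:R)%:E <= ereal_inf [set (n%:R)%:E | n in Q] :> \bar R)%E.
  by apply/ereal_infP => _ [q Qq <-]; rewrite lee_fin ler_nat minm //; exact/asboolP.
apply: (@le_trans _ _ ((p%:R)%:E)); first by apply: ereal_inf_lbound; exists p.
apply: (@le_trans _ _ (((k * m)%N%:R)%:E)); first by rewrite lee_fin ler_nat.
by rewrite natrM EFinM lee_wpmul2l // lee_fin ler0n.
Qed.

Section MinimalError.
Variables (R : realType) (d : nat) (w : Zd d -> R).

Lemma hnorm2_0 : hnorm2 w (fun=> 0) = 0%E.
Proof. by rewrite /hnorm2 esum1 // => k _; rewrite /cabs2 /= expr0n /= addr0 mul0r. Qed.

Lemma alg_err_ge0 n (L : 'I_n -> functional R d) phi : (0 <= alg_err w L phi)%E.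
Proof.
apply: le_trans (ereal_sup_ubound _); last first.
  exists (fun=> 0), (fun=> 0); split=> //; first by rewrite /in_ball hnorm2_0.
  by move=> j; rewrite lexx ler01.
by rewrite lee_fin sqrtr_ge0.
Qed.

Lemma ewc_ge0 n Lam : (0 <= ewc w n Lam)%E.
Proof. by apply/ereal_infP => _ [L [phi [_ ->]]]; exact: alg_err_ge0. Qed.

Lemma CRI_ge0 c : (0 <= CRI w c)%E.
Proof. by case: c => /=; [rewrite lee01 | exact: ewc_ge0]. Qed.

Lemma ewc0_Lstd : ewc w 0 Lstd = ewc w 0 Lall.
Proof.
rewrite /ewc; congr ereal_inf; apply/seteqP; split=> _ [L [phi [_ ->]]];
  by exists L, phi; split=> // -[].
Qed.

End MinimalError.

Section StdFromAll.
Variables (R : realType) (c1 c2 : nat).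
Hypothesis c2_gt0 : (0 < c2)%N.
Hypothesis ewc_Lstd_le_Lall : forall d m (w : Zd d -> R),
  (1 <= d)%N -> (1 <= m)%N -> admissible w ->
  (ewc w (c1 * m) Lstd <= (c2%:R)%:E * ewc w m Lall)%E.

Lemma ewc_Lstd_le_of_Lall c d (w : Zd d -> R) (eps : R) m :
    (1 <= d)%N -> admissible w -> 0 <= eps ->
    (ewc w m Lall <= (eps / c2%:R)%:E * CRI w c)%E ->
  (ewc w (c1 * m) Lstd <= eps%:E * CRI w c)%E.
Proof.
move=> d_ge1 w_adm eps_ge0; have c2_pos : (0 : R) < c2%:R by rewrite ltr0n.
case: m => [|m] ewc_le.
  rewrite muln0 ewc0_Lstd; apply: le_trans ewc_le _.
  by rewrite lee_wpmul2r ?CRI_ge0 // lee_fin ler_pdivrMr // ler_peMr // ler1n.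
apply: le_trans (ewc_Lstd_le_Lall d_ge1 (ltn0Sn m) w_adm) _.
apply: le_trans (lee_wpmul2l _ ewc_le) _; first by rewrite lee_fin ler0n.
by rewrite muleA -EFinM mulrC divfK ?gt_eqF.
Qed.

End StdFromAll.

Theorem theorem2p3 (R : realType) (c1 c2 : nat)
  (hc1 : (1 <= c1)%N) (hc2 : (1 <= c2)%N)
  (Hc : forall (d m : nat) (w : Zd d -> R), (1 <= d)%N -> (1 <= m)%N ->
          admissible w ->
          (ewc w (c1 * m) Lstd <= (c2%:R)%:E * ewc w m Lall)%E) :
  forall (c : crit) (d : nat) (w : Zd d -> R), (1 <= d)%N -> admissible w ->
  forall eps : R, 0 < eps < 1 ->
    (ncomp w c Lstd eps <= ((2 * c1)%N%:R)%:E * ncomp w c Lall (eps / c2%:R))%E.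
Proof.
move=> c d w d_ge1 w_adm eps /andP[eps_gt0 _].
apply: ereal_inf_nat_le; first by rewrite muln_gt0.
move=> m /= ewc_le; exists (c1 * m)%N; last by rewrite -mulnA leq_pmull.
exact: (ewc_Lstd_le_of_Lall hc2 Hc d_ge1 w_adm (ltW eps_gt0) ewc_le).
Qed.
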